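(* Let $q$ be a power of an odd prime, write $q-1=2^s r$ with $r$ odd, let $c\in\mathbb{F}_q^*$, and $f(X)=c(X^{q+1}+X^2)$ on $\mathbb{F}_{q^2}$. Then for every divisor $d\neq1$ of $r$ there are $\frac{q\,\varphi(d)}{\mathrm{ord}_d(2)}$ cycles of length $\mathrm{ord}_d(2)$ in the functional graph of $f$, and these are all the cycles of length greater than $1$. For $d=1$ there are $\frac{q\,\varphi(1)}{\mathrm{ord}_1(2)}+1=q+1$ cycles of length $\mathrm{ord}_1(2)=1$.
   Context: The functional graph of $f$ is the directed graph on $\mathbb{F}_{q^2}$ with edges $x\to f(x)$. $\varphi$ is Euler's totient function and $\mathrm{ord}_m(n)$ is the multiplicative order of $n$ modulo $m$. *)

From mathcomp Require Import all_boot all_order all_algebra all_fingroup all_solvable all_field.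
Set Implicit Arguments. Unset Strict Implicit. Unset Printing Implicit Defensive.
Import GRing.Theory.

(* Multiplicative order of a modulo m: least k > 0 with a^k = 1 (mod m).
   Only meaningful when coprime a m (then it exists by Euler); if a and m
   are not coprime it is defaulted to 1. *)
Definition mult_order_pred (m a : nat) : pred nat :=
  fun k => (0 < k) && (~~ coprime a m || (a ^ k == 1 %[mod m])).

Lemma mult_order_ex m a : exists k, mult_order_pred m a k.
Proof.
rewrite /mult_order_pred.
case: (boolP (coprime a m)) => cop; last by exists 1.
case: m cop => [|m] cop.
  by exists 1; rewrite /= /coprime gcdn0 in cop *; rewrite (eqP cop).
exists (totient m.+1); rewrite totient_gt0 /=.
by apply/eqP; apply: Euler_exp_totient.
Qed.

Definition mult_order (m a : nat) : nat := ex_minn (mult_order_ex m a).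

Definition fcycles (T : finType) (f : T -> T) : {set {set T}} :=
  [set C : {set T} | [exists x, fconnect f (f x) x && (C == [set y in fingraph.orbit f x])]].

Definition fcycles_of_length (T : finType) (f : T -> T) (n : nat) : {set {set T}} :=
  [set C in fcycles f | #|C| == n].

(* With tr x = x^q + x the trace of F_(q^2) over F_q and mu x = c * tr x, which
   lies in F_q, one has f x = mu x * x and mu (f x) = (mu x)^2, hence
   f^k x = (mu x)^(2^k - 1) * x.  So x <> 0 is periodic iff the order d of mu x
   in F_q^* is odd, i.e. d divides r, and its period is then ord_d(2).  The trace
   maps onto F_q with fibres of size q, so exactly q * phi(d) points have mu of
   order d; together with the fixed point 0 this counts the periodic points of
   period n, and n-cycles are these points grouped n at a time. *)

From mathcomp Require Import all_boot all_order all_algebra all_fingroup all_solvable all_field.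
From mathcomp Require Import ring zify.
Import GRing.Theory FinRing.Theory.
Set Implicit Arguments. Unset Strict Implicit.

Section PeriodicPoints.
Variables (T : finType) (f : T -> T).

Definition periodic_points n :=
  [set x | fconnect f (f x) x && (fingraph.order f x == n)].

Lemma card_orbit_set x : #|[set y in fingraph.orbit f x]| = fingraph.order f x.
Proof. by rewrite cardsE (card_uniqP (orbit_uniq f x)) size_orbit. Qed.

Lemma card_periodic_points n :
  #|periodic_points n| = n * #|fcycles_of_length f n|.
Proof.
rewrite -sum1_card (partition_big (fun x => [set y in fingraph.orbit f x])
   (mem (fcycles_of_length f n))); last first.
  move=> x; rewrite !inE => /andP[x_per /eqP n_def]; rewrite -n_def.
  by rewrite card_orbit_set eqxx andbT; apply/existsP; exists x; rewrite x_per /=.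
rewrite mulnC -sum_nat_const; apply: eq_bigr => C.
rewrite !inE => /andP[/existsP[x0 /andP[x0_per /eqP ->]] /eqP <-].
have x0_cycle : fcycle f (fingraph.orbit f x0) by rewrite -fconnect_f.
rewrite sum1_card card_orbit_set; apply: eq_card => x; rewrite unfold_in /= !inE.
apply/idP/idP => [/andP[_ /eqP/setP/(_ x)]|].
  by rewrite !inE in_orbit fconnect_orbit => <-.
rewrite [fconnect f x0 x]fconnect_orbit => x_in.
have same_orbit : [set y in fingraph.orbit f x] = [set y in fingraph.orbit f x0].
  have [i ->] := orbit_rot_cycle x0_cycle (orbit_uniq f x0) x_in.
  by apply/setP => y; rewrite !inE mem_rot.
rewrite same_orbit eqxx fconnect_f (cycle_orbit_cycle x0_cycle x_in).
by rewrite (eq_order_cycle x0_cycle (in_orbit _ x0) x_in) eqxx.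
Qed.

Lemma mem_periodic_points x k n : 0 < n ->
  (forall m, (iter m f x == x) = (k %| m)) ->
  (x \in periodic_points n) = (k == n).
Proof.
move=> n_gt0 iterE; rewrite inE.
have [k0|k_gt0] := posnP k.
  suff -> : fconnect f (f x) x = false by rewrite k0 (ltn_eqF n_gt0).
  by apply/negP => /(orbitPcycle 2 3)[m /eqP]; rewrite iterE k0 dvd0n.
have x_per : fconnect f (f x) x.
  by apply/(orbitPcycle 3 2); exists k.-1; rewrite prednK //; apply/eqP; rewrite iterE.
suff -> : fingraph.order f x = k by rewrite x_per.
apply/eqP; rewrite eqn_leq andbC dvdn_leq //=; last first.
  by rewrite -iterE; apply/eqP/(orbitPcycle 2 4).
rewrite leqNgt; apply/negP => k_lt.
have := findex_iter k_lt; move: (iterE k); rewrite dvdnn => /eqP ->.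
by rewrite findex0 => k_eq0; rewrite -k_eq0 in k_gt0.
Qed.

End PeriodicPoints.

Lemma card_preimset_seq (T : finType) (I : eqType) (g : T -> I) (s : seq I)
    (P : pred I) : uniq s ->
  \sum_(i <- s | P i) #|[set x | g x == i]| = #|[set x | (g x \in s) && P (g x)]|.
Proof.
elim: s => [_|i s IHs /= /andP[i_notin_s s_uniq]].
  by rewrite big_nil; apply/esym/eq_card0 => x; rewrite inE.
rewrite big_cons IHs //; case: ifP => Pi; last first.
  by apply: eq_card => x; rewrite !inE; case: eqP => // ->; rewrite Pi andbF.
rewrite -[RHS](cardsID [set x | g x == i]); congr (_ + _); apply: eq_card => x.
  by rewrite !inE; case: eqP => [->|]; rewrite ?Pi ?andbF.
by rewrite !inE; case: eqP => [->|]; rewrite ?(negPf i_notin_s) ?andbT.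
Qed.

Lemma mult_order_dvdn m a k :
  coprime a m -> (mult_order m a %| k) = (a ^ k == 1 %[mod m]).
Proof.
rewrite /mult_order => co; case: ex_minnP => o /andP[o_gt0].
rewrite co /= => a_o o_min.
have -> : (a ^ k == 1 %[mod m]) = (a ^ (k %% o) == 1 %[mod m]).
  rewrite {1}(divn_eq k o) expnD [k %/ o * o]mulnC expnM -modnMml -modnXm.
  by rewrite (eqP a_o) modnXm exp1n modnMml mul1n.
rewrite /dvdn; have [->|k_mod_gt0] := posnP (k %% o); first by rewrite expn0 eqxx.
apply/esym/negbTE; apply: contraTN (ltn_pmod k o_gt0) => a_k.
by rewrite -leqNgt o_min // /mult_order_pred k_mod_gt0 co.
Qed.

Lemma mult_order_dvdn_totient m a : coprime a m -> mult_order m a %| totient m.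
Proof. by move=> co; rewrite mult_order_dvdn // Euler_exp_totient. Qed.

Lemma dvdn_pred_exp2 d m :
  (d %| (2 ^ m).-1) = (if odd d then mult_order d 2 %| m else m == 0).
Proof.
case: ifP => d_odd.
  by rewrite mult_order_dvdn ?coprime2n // eqn_mod_dvd ?expn_gt0 // subn1.
case: m => [|m]; first by rewrite dvdn0.
apply/negbTE; apply: contraFN d_odd => /dvdn_odd; apply.
by rewrite -subn1 oddB ?expn_gt0 // oddX.
Qed.

Lemma card_order_cyclic (gT : finGroupType) (G : {group gT}) d :
  cyclic G -> d %| #|G| -> #|[set x in G | #[x] == d]%g| = totient d.
Proof.
move=> /cyclicP[a ->]; rewrite -orderE => /dvdnP[k ord_a].
have k_gt0 : 0 < k by move: (order_gt0 a); rewrite ord_a muln_gt0 => /andP[].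
have ord_ak : #[a ^+ k]%g = d by rewrite orderXdiv ord_a ?dvdn_mulr // mulKn.
rewrite -{2}ord_ak totient_gen; apply: eq_card => x; rewrite !inE /generator.
have [x_in|x_notin] := boolP (x \in <[a]>%g).
  by rewrite (eq_subG_cyclic (cycle_cyclic a)) ?cycleX ?cycle_subG // -!orderE ord_ak eq_sym.
apply/esym/negbTE; apply: contraNN x_notin => /eqP ak_x.
by rewrite -cycle_subG -ak_x cycleX.
Qed.

Local Open Scope ring_scope.

(* The junk value 0 for non-units keeps [unit_order_dvdn] free of side conditions. *)
Definition unit_order (R : finUnitRingType) (a : R) : nat :=
  if insub a is Some w then #[w : {unit R}]%g else 0.

Lemma unit_order_dvdn (R : finUnitRingType) (a : R) k :
  (unit_order a %| k)%N = (a ^+ k == 1).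
Proof.
rewrite /unit_order; case: insubP => [w _ <-|a_nonunit].
  by rewrite order_dvdn -val_eqE val_unitX.
case: k => [|k]; first by rewrite dvdn0 expr0 eqxx.
apply/esym/negbTE; apply: contraNN a_nonunit => /eqP ak_1.
by rewrite -(unitrX_pos _ (ltn0Sn k)) ak_1 unitr1.
Qed.

Lemma unit_order0 (R : finUnitRingType) : unit_order (0 : R) = 0%N.
Proof. by rewrite /unit_order insubN ?unitr0. Qed.

Lemma card_unit_order (F : finFieldType) d : (d %| #|F|.-1)%N ->
  #|[set a : F | unit_order a == d]| = totient d.
Proof.
rewrite -card_finField_unit => d_dvd.
have d_gt0 : (0 < d)%N := dvdn_gt0 (cardG_gt0 _) d_dvd.
rewrite -(card_order_cyclic (field_unit_group_cyclic _) d_dvd).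
rewrite -(card_imset _ val_inj); apply: eq_card => a; rewrite !inE /unit_order.
case: insubP => [w _ <-|a_nonunit]; first by rewrite mem_imset ?inE //; apply: val_inj.
rewrite (ltn_eqF d_gt0); apply/esym/imsetP => -[w _ a_w].
by rewrite a_w (valP w) in a_nonunit.
Qed.

Lemma card_roots_Xn_add_le (R : finIdomainType) n (P : {poly R}) :
  (size P <= n)%N -> (#|[set x | root ('X^n + P) x]| <= n)%N.
Proof.
move=> size_P; have size_XnP : size ('X^n + P) = n.+1.
  by rewrite size_polyDl size_polyXn.
rewrite -ltnS -size_XnP cardE; apply: max_poly_roots (enum_uniq _).
  by rewrite -size_poly_eq0 size_XnP.
by apply/allP => x; rewrite mem_enum inE.
Qed.

Section QuadraticMap.
Variables (F : finFieldType) (q s r : nat) (c : F).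
Hypotheses (q_pchar : [pchar F].-nat q) (card_F : #|F| = (q ^ 2)%N).
Hypotheses (c_neq0 : c != 0) (c_fixed : c ^+ q = c).
Hypotheses (q_pred : q.-1 = (2 ^ s * r)%N) (r_odd : odd r).

Definition tr (x : F) := x ^+ q + x.
Definition mu (x : F) := c * tr x.
Definition qmap (x : F) := c * (x ^+ q.+1 + x ^+ 2).

Lemma q_gt1 : (1 < q)%N.
Proof.
have := card_finNzRing_gt1 F; rewrite card_F.
by case: q => [|[|q']].
Qed.

Lemma exprqK (x : F) : x ^+ q ^+ q = x.
Proof. by rewrite -exprM mulnn -card_F expf_card. Qed.

Lemma tr_fixed x : tr x ^+ q = tr x.
Proof. by rewrite /tr exprDn_pchar // exprqK addrC. Qed.

Lemma mu_fixed x : mu x ^+ q = mu x.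
Proof. by rewrite exprMn c_fixed tr_fixed. Qed.

Lemma qmapE x : qmap x = mu x * x.
Proof. by rewrite /qmap /mu /tr exprS expr2; ring. Qed.

Lemma mu_qmap x : mu (qmap x) = mu x ^+ 2.
Proof.
rewrite qmapE {1}/mu /tr exprMn mu_fixed.
by rewrite /mu /tr expr2; ring.
Qed.

Lemma iter_qmap k x : iter k qmap x = mu x ^+ (2 ^ k).-1 * x.
Proof.
elim: k x => [|k IHk] x; first by rewrite expn0 expr0 mul1r.
rewrite iterSr IHk mu_qmap qmapE mulrA -exprM -exprSr expnS.
by congr (_ ^+ _ * _); have := expn_gt0 2 k; lia.
Qed.

Lemma card_tr_fiber_le t : (#|[set x | tr x == t]| <= q)%N.
Proof.
have -> : [set x | tr x == t] = [set x | root ('X^q + ('X - t%:P)) x].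
  by apply/setP => x; rewrite !inE rootE !hornerE subr_eq0.
by apply: (@card_roots_Xn_add_le F); rewrite size_XsubC q_gt1.
Qed.

Lemma card_fixed_le : (#|[set t : F | t ^+ q == t]| <= q)%N.
Proof.
have -> : [set t : F | t ^+ q == t] = [set x | root ('X^q + - 'X) x].
  by apply/setP => x; rewrite !inE rootE !hornerE subr_eq0.
by apply: card_roots_Xn_add_le; rewrite size_polyN size_polyX q_gt1.
Qed.

(* At most q fibres over F_q, each of size at most q, partition the q^2 points of F. *)
Lemma card_tr_fiber t : t ^+ q = t -> #|[set x | tr x == t]| = q.
Proof.
move=> t_fixed; pose Fq := [set u : F | u ^+ q == u].
have t_in : t \in Fq by rewrite inE t_fixed.
have sum_fibers : (\sum_(u in Fq) #|[set x | tr x == u]| = q * q)%N.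
  rewrite mulnn -card_F -sum1_card [RHS](partition_big tr (mem Fq)) => [|x _].
    by apply: eq_bigr => u _; rewrite sum1_card; apply: eq_card => x; rewrite !inE.
  by rewrite !inE tr_fixed.
apply/eqP; rewrite eqn_leq card_tr_fiber_le leqNgt; apply/negP => lt_q.
have : (\sum_(u in Fq) #|[set x | tr x == u]| < #|Fq| * q)%N.
  rewrite -sum_nat_const (bigD1 t) //= [X in (_ < X)%N](bigD1 t) //=.
  by rewrite -addSn leq_add // leq_sum // => u _; apply: card_tr_fiber_le.
by rewrite sum_fibers ltnNge leq_mul2r card_fixed_le orbT.
Qed.

Lemma r_gt0 : (0 < r)%N.
Proof. by case: (r) r_odd. Qed.

Lemma mu0 : mu 0 = 0.
Proof. by rewrite /mu /tr expr0n gtn_eqF ?(ltnW q_gt1) // addr0 mulr0. Qed.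

Lemma fixed_unit_order (a : F) : a != 0 -> (a ^+ q == a) = (unit_order a %| q.-1)%N.
Proof.
move=> a_neq0; rewrite unit_order_dvdn -(inj_eq (mulIf a_neq0) (a ^+ q.-1)).
by rewrite mul1r -exprSr prednK // ltnW // q_gt1.
Qed.

Lemma card_mu_fiber (a : F) : a ^+ q = a -> #|[set x | mu x == a]| = q.
Proof.
move=> a_fixed; rewrite -(@card_tr_fiber (a / c)); last first.
  by rewrite exprMn exprVn a_fixed c_fixed.
apply: eq_card => x; rewrite !inE /mu -{1}(divfK c_neq0 a) mulrC.
by rewrite (inj_eq (mulIf c_neq0)).
Qed.

Lemma card_unit_order_mu d : (d %| q.-1)%N ->
  #|[set x | unit_order (mu x) == d]| = (q * totient d)%N.
Proof.
move=> d_dvd; have d_gt0 : (0 < d)%N by apply: dvdn_gt0 d_dvd; rewrite -subn1 subn_gt0 q_gt1.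
have d_dvd_F : (d %| #|F|.-1)%N.
  apply: dvdn_trans d_dvd _; rewrite card_F; apply/dvdnP; exists q.+1.
  by have := q_gt1; nia.
rewrite -sum1_card (partition_big mu (fun a => unit_order a == d)) => [|x]; last by rewrite inE.
rewrite -(card_unit_order d_dvd_F) mulnC -sum_nat_const.
apply: eq_big => [a|a /eqP a_ord]; first by rewrite inE.
have a_neq0 : a != 0 by apply/eqP => a0; move: d_gt0; rewrite -a_ord a0 unit_order0.
rewrite -(@card_mu_fiber a); last by apply/eqP; rewrite fixed_unit_order // a_ord.
rewrite sum1_card; apply: eq_card => x; rewrite unfold_in !inE.
by apply: andb_idl => /eqP ->; rewrite a_ord.
Qed.

Lemma iter_qmap_eq x m : x != 0 ->
  (iter m qmap x == x) = (unit_order (mu x) %| (2 ^ m).-1)%N.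
Proof.
move=> x_neq0; rewrite iter_qmap unit_order_dvdn.
by rewrite -[X in _ == X]mul1r (inj_eq (mulIf x_neq0)).
Qed.

Lemma odd_unit_order_mu x :
  odd (unit_order (mu x)) = (unit_order (mu x) \in divisors r).
Proof.
rewrite -dvdn_divisors ?r_gt0 //; have [->|mu_neq0] := eqVneq (mu x) 0.
  by rewrite unit_order0 dvd0n (gtn_eqF r_gt0).
apply/idP/idP => [d_odd|/dvdn_odd->//].
have := mu_fixed x; move/eqP; rewrite fixed_unit_order // q_pred.
by rewrite Gauss_dvdr // coprimeXr // coprime_sym coprime2n.
Qed.

Lemma mem_periodic_points_qmap n x : (0 < n)%N ->
  (x \in periodic_points qmap n) =
  ((x == 0) && (n == 1%N)) ||
  ((unit_order (mu x) \in divisors r) && (mult_order (unit_order (mu x)) 2 == n)).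
Proof.
move=> n_gt0; rewrite -odd_unit_order_mu.
have [->|x_neq0] := eqVneq x 0.
  rewrite (@mem_periodic_points _ _ _ 1) // => [|m]; last by rewrite iter_qmap mulr0 eqxx dvd1n.
  by rewrite mu0 unit_order0 /= orbF eq_sym.
set d := unit_order (mu x).
rewrite (@mem_periodic_points _ _ _ (if odd d then mult_order d 2 else 0)) // => [|m].
  by case: ifP => //=; rewrite (ltn_eqF n_gt0).
by rewrite iter_qmap_eq // dvdn_pred_exp2; case: ifP.
Qed.

Lemma card_periodic_points_qmap n : (0 < n)%N ->
  #|periodic_points qmap n| =
  ((n == 1%N) + \sum_(d <- divisors r | mult_order d 2 == n) q * totient d)%N.
Proof.
move=> n_gt0; rewrite (cardsD1 0) mem_periodic_points_qmap // -odd_unit_order_mu mu0 unit_order0 eqxx /= orbF.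
congr (_ + _)%N.
rewrite big_seq_cond (eq_bigr (fun d => #|[set x | unit_order (mu x) == d]|)).
  rewrite -big_seq_cond card_preimset_seq ?divisors_uniq //.
  apply: eq_card => x; rewrite in_setD1 mem_periodic_points_qmap // inE.
  by case: eqP => [->|] /=; rewrite ?(ltn_eqF n_gt0) -?odd_unit_order_mu ?mu0 ?unit_order0.
move=> d /andP[d_r _].
by rewrite card_unit_order_mu // q_pred dvdn_mull // dvdn_divisors ?r_gt0.
Qed.

End QuadraticMap.

Theorem theorem17 (F : finFieldType) (p e q s r : nat) (c : F) :
  prime p -> odd p -> (0 < e)%N -> q = (p ^ e)%N ->
  #|F| = (q ^ 2)%N ->
  q.-1 = (2 ^ s * r)%N -> odd r ->
  c != 0 -> c ^+ q = c ->
  forall n : nat, (0 < n)%N ->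
    #|fcycles_of_length (fun x : F => c * (x ^+ q.+1 + x ^+ 2)) n| =
    ((\sum_(d <- divisors r | mult_order d 2 == n) (q * totient d %/ n)) + (n == 1%N))%N.
Proof.
move=> p_prime _ _ q_def card_F q_pred r_odd c_neq0 c_fixed n n_gt0.
have q_pchar : [pchar F].-nat q.
  have p_char : p \in [pchar F].
    by apply: (@card_finPcharP _ _ (e * 2)); rewrite // card_F q_def -expnM.
  by rewrite q_def (eq_pnat _ (pcharf_eq p_char)) pnatX pnat_id.
apply/eqP; rewrite -(eqn_pmul2l n_gt0) -card_periodic_points.
rewrite (card_periodic_points_qmap q_pchar card_F c_neq0 c_fixed q_pred r_odd n_gt0).
rewrite mulnDr big_distrr /= addnC; apply/eqP; congr (_ + _)%N; last first.
  by case: (n) => [|[|m]]; rewrite ?muln0.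
rewrite big_seq_cond [RHS]big_seq_cond; apply: eq_bigr => d /andP[d_r /eqP <-].
rewrite [RHS]mulnC divnK // dvdn_mull // mult_order_dvdn_totient // coprime2n.
by apply: (dvdn_odd _ r_odd); rewrite dvdn_divisors ?(r_gt0 r_odd).
Qed.
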